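(* Consider the sequences $(x_k),(y_k),(\nu_k),(\lambda_k)$ generated by Algorithm 2 (described in the context), and let $A$, $K$ and $(i_k)$ be as defined in the context. Set $\sigma:=\frac{2\hat\theta}{\eta L}$. Then $\sigma<1$ and, for all $k\in K$, $$\nu_{i_k}\in N_C(y_{i_k}),$$ $$\big\|\lambda_{i_k}(F(y_{i_k})+\nu_{i_k})+y_{i_k}-x_{i_{k-1}}\big\|\le\sigma\|y_{i_k}-x_{i_{k-1}}\|,$$ $$\lambda_{i_k}\|y_{i_k}-x_{i_{k-1}}\|\ge\eta,$$ $$x_{i_k}=x_{i_{k-1}}-\tau\lambda_{i_k}(F(y_{i_k})+\nu_{i_k}).$$ Consequently, the sequences $(x_{i_k})_{k\in K}$, $(y_{i_k})_{k\in K}$, $(\lambda_{i_k})_{k\in K}$ (with $x_{i_0}=x_0$) are generated by the large-step under-relaxed HPE method (Algorithm 1 in the context) with parameters $\tau$, $\sigma$, $\eta$ and $N=\#A$.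
   Context: Setting: $\mathcal H$ real Hilbert space; $C\subseteq\mathcal H$ nonempty closed convex; $N_C(x)=\{\nu:\langle\nu,y-x\rangle\le0\ \forall y\in C\}$ if $x\in C$, $N_C(x)=\emptyset$ otherwise. $F:C\to\mathcal H$ is monotone, continuously differentiable, and $\|F'(x)-F'(y)\|\le L\|x-y\|$ for all $x,y\in C$, with $L>0$; the set of $x$ with $0\in F(x)+N_C(x)$ is nonempty. For $y\in C$, $F_y(x):=F(y)+F'(y)(x-y)$. Parameters: $0\le\hat\sigma<1/2$; $0<\theta<(1-\hat\sigma)(1-2\hat\sigma)$; $\hat\theta:=\theta\big(\frac{\hat\sigma}{1-\hat\sigma}+\frac{\theta}{(1-\hat\sigma)^2}\big)$; $\eta>2\hat\theta/L$; $\tau:=\dfrac{2(\theta-\hat\theta)}{2\theta+\frac{\eta L}{2}+\sqrt{(2\theta+\frac{\eta L}{2})^2-4\theta(\theta-\hat\theta)}}$ (one has $0<\tau<1$). Algorithm 2: input $x_0\in C$, $y_0:=x_0$, $\nu_0:=0$, $\lambda_1>0$ with $\lambda_1^2\|F(y_0)\|\le2\theta/L$. For $k=1,2,\dots$: if $F(y_{k-1})+\nu_{k-1}=0$, stop and return $y_{k-1}$. If $\frac{\lambda_kL}{2}\|\lambda_k(F(y_{k-1})+\nu_{k-1})+y_{k-1}-x_{k-1}\|\le\hat\theta$, set $y_k=y_{k-1}$, $\nu_k=\nu_{k-1}$; otherwise find any $(y_k,\nu_k)$ with $\nu_k\in N_C(y_k)$ and $\|\lambda_k(F_{y_{k-1}}(y_k)+\nu_k)+y_k-x_{k-1}\|\le\hat\sigma\|y_k-y_{k-1}\|$.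 Then, if $\lambda_k\|y_k-x_{k-1}\|\ge\eta$, set $x_k=x_{k-1}-\tau\lambda_k(F(y_k)+\nu_k)$ and $\lambda_{k+1}=(1-\tau)\lambda_k$; else set $x_k=x_{k-1}$ and $\lambda_{k+1}=\lambda_k/(1-\tau)$. Standing assumption: the algorithm never stops at the first test, i.e. $F(y_{k-1})+\nu_{k-1}\neq0$ for all $k$. Index sets: $A=\{k\ge1:\lambda_k\|y_k-x_{k-1}\|\ge\eta\}$; $K=\{k\ge1: k\le\#A\}$; $i_0=0$ and $i_k$ is the $k$-th element of $A$ (in increasing order), so $A=\{i_k:k\in K\}$. Algorithm 1 (large-step under-relaxed HPE method) with input $x_0\in\mathcal H$, $0<\tau<1$, $0\le\sigma<1$, $\eta>0$, $N\in\mathbb N\cup\{\infty\}$: for $k=1,\dots,N$, choose $\lambda_k>0$ and $y_k\in\mathcal H$, $\nu_k\in N_C(y_k)$ with $\|\lambda_k(F(y_k)+\nu_k)+y_k-x_{k-1}\|\le\sigma\|y_k-x_{k-1}\|$ and $\lambda_k\|y_k-x_{k-1}\|\ge\eta$, and set $x_k=x_{k-1}-\tau\lambda_k(F(y_k)+\nu_k)$. *)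

From HB Require Import structures.
From mathcomp Require Import all_boot all_order all_algebra.
From mathcomp Require Import all_classical all_reals all_analysis.
Set Implicit Arguments. Unset Strict Implicit. Unset Printing Implicit Defensive.
Import Order.TTheory GRing.Theory Num.Theory.
Local Open Scope classical_set_scope.
Local Open Scope ring_scope.

Section Defs.
Variables (R : realType) (V : completeNormedModType R).

(* ip is an inner product on V inducing the norm of V; together with the
   completeness of V, (V, ip) is a real Hilbert space. *)
Definition is_inner_product (ip : V -> V -> R) : Prop :=
  [/\ (forall x y, ip x y = ip y x),
      (forall (a : R) x y z, ip (a *: x + y) z = a * ip x z + ip y z) &
      (forall x, ip x x = `|x| ^+ 2)].

Definition convex_set_V (C : set V) : Prop :=
  forall x y (t : R), C x -> C y -> 0 <= t -> t <= 1 -> C (t *: x + (1 - t) *: y).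

Definition normal_cone (ip : V -> V -> R) (C : set V) (x : V) : set V :=
  [set nu | C x /\ forall y, C y -> ip nu (y - x) <= 0].

Definition monotone_on (ip : V -> V -> R) (C : set V) (F : V -> V) : Prop :=
  forall x y, C x -> C y -> 0 <= ip (F x - F y) (x - y).

Definition bounded_linear_on (C : set V) (F' : V -> V -> V) : Prop :=
  forall y, C y ->
    (forall (a : R) u v, F' y (a *: u + v) = a *: F' y u + F' y v) /\
    exists M : R, forall v, `|F' y v| <= M * `|v|.

Definition frechet_deriv_on (C : set V) (F : V -> V) (F' : V -> V -> V) : Prop :=
  forall y, C y -> forall e : R, 0 < e -> exists d : R, 0 < d /\
    forall x, C x -> `|x - y| < d ->
      `|F x - F y - F' y (x - y)| <= e * `|x - y|.

Definition deriv_continuous_on (C : set V) (F' : V -> V -> V) : Prop :=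
  forall y, C y -> forall e : R, 0 < e -> exists d : R, 0 < d /\
    forall x, C x -> `|x - y| < d -> forall v, `|F' x v - F' y v| <= e * `|v|.

Definition deriv_lipschitz_on (C : set V) (F' : V -> V -> V) (L : R) : Prop :=
  forall x y, C x -> C y -> forall v, `|F' x v - F' y v| <= L * `|x - y| * `|v|.

Definition Flin (F : V -> V) (F' : V -> V -> V) (y x : V) : V := F y + F' y (x - y).

End Defs.

Definition thetahat (R : realType) (sigmah theta : R) : R :=
  theta * (sigmah / (1 - sigmah) + theta / (1 - sigmah) ^+ 2).

Definition tau_param (R : realType) (sigmah theta eta L : R) : R :=
  let th := thetahat sigmah theta in
  2 * (theta - th) /
  (2 * theta + eta * L / 2 +
   Num.sqrt ((2 * theta + eta * L / 2) ^+ 2 - 4 * theta * (theta - th))).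

(* Algorithm 2 (sequences x, y, nu : nat -> V, lam : nat -> R; lam 0 unused).
   Step k+1 of the paper is written with indices k (previous) and k.+1. *)
Definition Alg2_run (R : realType) (V : completeNormedModType R)
  (ip : V -> V -> R) (C : set V) (F : V -> V) (F' : V -> V -> V)
  (L sigmah theta eta : R)
  (x y nu : nat -> V) (lam : nat -> R) : Prop :=
  let th := thetahat sigmah theta in
  let tau := tau_param sigmah theta eta L in
  [/\ [/\ C (x 0%N), y 0%N = x 0%N & nu 0%N = 0],
      [/\ 0 < lam 1%N & lam 1%N ^+ 2 * `|F (y 0%N)| <= 2 * theta / L],
      (forall k : nat,
         let test := lam k.+1 * L / 2 *
                     `|lam k.+1 *: (F (y k) + nu k) + y k - x k| <= th in
         (test -> y k.+1 = y k /\ nu k.+1 = nu k) /\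
         (~ test -> normal_cone ip C (y k.+1) (nu k.+1) /\
            `|lam k.+1 *: (Flin F F' (y k) (y k.+1) + nu k.+1) + y k.+1 - x k|
              <= sigmah * `|y k.+1 - y k|)) &
      (forall k : nat,
         (eta <= lam k.+1 * `|y k.+1 - x k| ->
            x k.+1 = x k - (tau * lam k.+1) *: (F (y k.+1) + nu k.+1) /\
            lam k.+2 = (1 - tau) * lam k.+1) /\
         (~ (eta <= lam k.+1 * `|y k.+1 - x k|) ->
            x k.+1 = x k /\ lam k.+2 = lam k.+1 / (1 - tau)))].

Definition setA (R : realType) (V : completeNormedModType R)
  (eta : R) (x y : nat -> V) (lam : nat -> R) : set nat :=
  [set k | (1 <= k)%N /\ eta <= lam k * `|y k - x k.-1|].

(* K = {k >= 1 : k <= #A}, where k <= #A means A has at least k elements *)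
Definition setK (A : set nat) : set nat :=
  [set k | (1 <= k)%N /\ (`I_k #<= A)%card].

(* i_0 = 0, i_{k+1} = the least element of A greater than i_k
   (so i_k is the k-th element of A for k in K) *)
Fixpoint enumA (A : set nat) (k : nat) : nat :=
  match k with
  | 0 => 0%N
  | k'.+1 => let p := enumA A k' in
      xget 0%N [set n | A n /\ (p < n)%N /\ forall m, (p < m)%N -> (m < n)%N -> ~ A m]
  end.

(* Algorithm 1 (large-step under-relaxed HPE), parameters tau sigma eta,
   iterations indexed by the set Idx = {1, ..., N} (N possibly infinite). *)
Definition Alg1_run (R : realType) (V : completeNormedModType R)
  (ip : V -> V -> R) (C : set V) (F : V -> V)
  (x0 : V) (tau sigma eta : R) (Idx : set nat)
  (x y nu : nat -> V) (lam : nat -> R) : Prop :=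
  [/\ 0 < tau < 1, 0 <= sigma < 1, 0 < eta, x 0%N = x0 &
      forall k, Idx k ->
        [/\ 0 < lam k, normal_cone ip C (y k) (nu k),
            `|lam k *: (F (y k) + nu k) + y k - x k.-1| <= sigma * `|y k - x k.-1|,
            eta <= lam k * `|y k - x k.-1| &
            x k = x k.-1 - (tau * lam k) *: (F (y k) + nu k)]].

(* The iterates of Algorithm 2 satisfy, at every k, the invariant
     lam_{k+1} L/2 |lam_{k+1} (F y_k + nu_k) + y_k - x_k| <= theta.
   From such a point an inexact projected Newton step improves the bound to thetahat:
   monotonicity of F'(y_k) and of the normal cone give
   (1 - sigmah) |y_{k+1} - y_k| <= |lam_{k+1} (F y_k + nu_k) + y_k - x_k|, and since F' is
   L-Lipschitz the linearization error is at most L/2 |y_{k+1} - y_k|^2 (mean value theorem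
   along the segment). The value of tau is chosen so that both updates restore the
   invariant: the under-relaxed step (lam shrinks by 1 - tau) and the extrapolation
   (lam grows by 1 / (1 - tau), x unchanged). On a large step, lam |y - x| >= eta turns the
   thetahat bound into the HPE error criterion with sigma = 2 thetahat / (eta L); between two
   large steps x does not move, so the large steps form a run of Algorithm 1. *)

From HB Require Import structures.
From mathcomp Require Import all_boot all_order all_algebra.
From mathcomp Require Import all_classical all_reals all_analysis.
From mathcomp Require Import ring lra.
Import Order.TTheory GRing.Theory Num.Theory numFieldNormedType.Exports.
Local Open Scope classical_set_scope.
Local Open Scope ring_scope.
Set Implicit Arguments. Unset Strict Implicit. Unset Printing Implicit Defensive.

Section RealDerivative.
Variable R : realType.
Implicit Types (g D : R -> R) (a b s t : R).

Definition derivative_within (I : set R) g D := forall t, I t -> forall e, 0 < e ->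
  exists2 r, 0 < r & forall s, I s -> `|s - t| < r ->
    `|g s - g t - (s - t) * D t| <= e * `|s - t|.

(* Composing with clamp a b extends a function on [a, b] by constants, so that
   continuity within [a, b] becomes plain continuity, as the mean value theorem needs. *)
Definition clamp a b t : R := Num.max a (Num.min t b).

Lemma clamp_id a b t : a <= t <= b -> clamp a b t = t.
Proof. by move=> /andP[ta tb]; rewrite /clamp (min_l tb) (max_r ta). Qed.

Lemma clamp_itv a b t : a <= b -> a <= clamp a b t <= b.
Proof. by move=> ab; rewrite /clamp le_max lexx /= ge_max ab ge_min lexx orbT. Qed.

Lemma clamp_lipschitz a b s t : `|clamp a b s - clamp a b t| <= `|s - t|.
Proof.
rewrite /clamp /Num.max /Num.min.
have := ler_norm (s - t); have := ler_norm (t - s); rewrite distrC.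
by repeat case: ifP; move=> *; rewrite ler_norml; apply/andP; split; lra.
Qed.

Lemma is_derive_of_increment_bound g t d :
  (forall e, 0 < e -> exists2 r, 0 < r & forall h, h != 0 -> `|h| < r ->
    `|g (h + t) - g t - h * d| <= e * `|h|) -> is_derive t 1 g d.
Proof.
move=> H.
suff qcvg : (fun h : R => h^-1 *: ((g \o shift t) (h *: (1 : R^o)) - g t)) @ 0^' --> (d : R^o).
  by apply: DeriveDef; [exact: cvgP qcvg | exact: cvg_lim qcvg].
apply/cvgrPdist_le => e e0; have [r r0 Hr] := H e e0.
near=> h.
have hn : h != 0 by near: h; exact: withinT.
have hr : `|h| < r by near: h; exact: dnbhs0_lt.
have hp : 0 < `|h| by rewrite normr_gt0.
rewrite -(ler_pM2r hp); apply: le_trans (Hr h hn hr); rewrite le_eqVlt; apply/orP; left.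
rewrite -normrM -normrN [h *: 1]mulr1; apply/eqP; congr `|_|; rewrite /=.
have -> : h^-1 *: (g (h + t) - g t) = h^-1 * (g (h + t) - g t) :> R by [].
by field.
Unshelve. all: by end_near.
Qed.

Section ClampedExtension.
Variables (g D : R -> R) (a b : R).
Hypothesis ab : a <= b.
Hypothesis derg : derivative_within [set t | a <= t <= b] g D.

Lemma derivative_within_continuous : continuous (g \o clamp a b).
Proof.
move=> t; apply/cvgrPdist_le => e e0.
set c := clamp a b t; set M := `|D c| + 1.
have [r r0 Hr] := derg (clamp_itv t ab) ltr01; rewrite -/c in Hr.
have M0 : 0 < M by rewrite ltr_pwDr.
apply/nbhs_normP; exists (Num.min r (e / M)) => [|s /= ts].
  by rewrite /= lt_min r0 divr_gt0.
have : `|clamp a b s - c| < Num.min r (e / M).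
  by apply: le_lt_trans (clamp_lipschitz _ _ _ _) _; rewrite distrC.
rewrite lt_min => /andP[sr se]; rewrite distrC /= -/c.
set u := clamp a b s - c in sr se.
have := Hr _ (clamp_itv s ab) sr; rewrite -/u mul1r => hu.
have -> : g (clamp a b s) - g c = (g (clamp a b s) - g c - u * D c) + u * D c.
  by rewrite subrK.
apply: le_trans (ler_normD _ _) _; rewrite normrM.
rewrite ltr_pdivlMr // /M mulrDr mulr1 in se.
by have := normr_ge0 (D c); have := normr_ge0 u; lra.
Qed.

Lemma derivative_within_is_derive t : a < t < b -> is_derive t 1 (g \o clamp a b) (D t).
Proof.
move=> /andP[ta tb]; apply: is_derive_of_increment_bound => e e0.
have tab : a <= t <= b by rewrite !ltW.
have [r r0 Hr] := derg tab e0.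
exists (Num.min r (Num.min (t - a) (b - t))); first by rewrite !lt_min r0 !subr_gt0 ta tb.
move=> h _; rewrite !lt_min => /andP[hr /andP[hta hbt]].
have := ler_norm h; have := ler_norm (- h); rewrite normrN => h1 h2.
have hab : a <= h + t <= b by apply/andP; split; lra.
by rewrite /= !clamp_id //; have := Hr _ hab; rewrite addrK; apply.
Qed.

End ClampedExtension.

Lemma derivative_within_le0_nonincr g D a b : a < b ->
  derivative_within [set t | a <= t <= b] g D ->
  (forall t, a < t < b -> D t <= 0) -> g b <= g a.
Proof.
move=> ab derg HD; have ab' := ltW ab.
have dG t : t \in `]a, b[ -> is_derive t 1 (g \o clamp a b) (D t).
  by rewrite in_itv /=; exact: derivative_within_is_derive.
have [c cab] := MVT ab dG (continuous_subspaceT (derivative_within_continuous ab' derg)).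
rewrite in_itv /= in cab; rewrite /= !clamp_id ?lexx ?ab' // -subr_le0 => ->.
by rewrite pmulr_lle0 ?subr_gt0 // HD.
Qed.

Lemma derivative_within_linear_bound g D (M : R) : 0 <= M ->
  derivative_within [set t | 0 <= t <= 1] g D ->
  (forall t, 0 < t < 1 -> D t <= M * t) -> g 1 - g 0 <= M / 2.
Proof.
move=> M0 Hg HD.
pose G t := g t - M / 2 * t ^+ 2.
suff : G 1 <= G 0 by rewrite /G expr1n expr0n /= mulr1 mulr0 subr0 -subr_le0; lra.
apply: (@derivative_within_le0_nonincr G (fun t => D t - M * t)) => //; last first.
  by move=> t /HD; rewrite subr_le0.
move=> t t01 e e0.
have [r r0 Hr] := Hg t t01 (e / 2) (divr_gt0 e0 (ltr0n _ 2)).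
exists (Num.min r (e / (M + 1))); first by rewrite lt_min r0 divr_gt0 // ltr_pwDr.
move=> s s01; rewrite lt_min => /andP[sr se].
have := Hr s s01 sr; rewrite ltr_pdivlMr ?ltr_pwDr // in se.
have -> : G s - G t - (s - t) * (D t - M * t) =
          g s - g t - (s - t) * D t - M / 2 * (s - t) ^+ 2.
  by rewrite /G; field.
set u := s - t in se *; set q := g s - g t - u * D t => hq.
have u0 := normr_ge0 u; have q0 := normr_ge0 q.
apply: le_trans (ler_normB _ _) _; rewrite normrM normrX ger0_norm ?divr_ge0 //.
have := ler_wpM2l u0 (ltW se); nra.
Qed.

End RealDerivative.

Section InnerProduct.
Variables (R : realType) (V : completeNormedModType R) (ip : V -> V -> R).
Hypothesis hip : is_inner_product ip.

Lemma ipC u v : ip u v = ip v u.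
Proof. by case: hip. Qed.

Lemma ip_normr2 u : ip u u = `|u| ^+ 2.
Proof. by case: hip. Qed.

Lemma ipDl u w v : ip (u + w) v = ip u v + ip w v.
Proof. by case: hip => _ lin _; have := lin 1 u w v; rewrite scale1r mul1r. Qed.

Lemma ip0l v : ip 0 v = 0.
Proof. by apply: (addrI (ip 0 v)); rewrite -ipDl !addr0. Qed.

Lemma ipZl a u v : ip (a *: u) v = a * ip u v.
Proof. by case: hip => _ lin _; have := lin a u 0 v; rewrite addr0 ip0l addr0. Qed.

Lemma ipNl u v : ip (- u) v = - ip u v.
Proof. by rewrite -scaleN1r ipZl mulN1r. Qed.

Lemma ipBl u w v : ip (u - w) v = ip u v - ip w v.
Proof. by rewrite ipDl ipNl. Qed.

Lemma ipZr a u v : ip u (a *: v) = a * ip u v.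
Proof. by rewrite ipC ipZl ipC. Qed.

Lemma ipBr u w v : ip v (u - w) = ip v u - ip v w.
Proof. by rewrite ipC ipBl !(ipC v). Qed.

Lemma ip_le_mul_norm u v : ip u v <= `|u| * `|v|.
Proof.
have [/eqP|uv0] := eqVneq (`|u| * `|v|) 0.
  by rewrite mulf_eq0 => /orP[] /eqP/normr0_eq0 ->; rewrite ?ip0l ?(ipC u) ?ip0l ?normr0 ?mul0r ?mulr0.
have uv : 0 < `|u| * `|v| by rewrite lt_def uv0 mulr_ge0.
have := sqr_ge0 `| `|v| *: u - `|u| *: v|.
rewrite -ip_normr2 !(ipBl, ipBr, ipZl, ipZr) !ip_normr2 (ipC v u).
nra.
Qed.

Lemma normr_ip_le u v : `|ip u v| <= `|u| * `|v|.
Proof.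
rewrite ler_norml ip_le_mul_norm andbT.
by have := ip_le_mul_norm (- u) v; rewrite ipNl normrN; lra.
Qed.

End InnerProduct.

Section DerivativeAlongSegments.
Variables (R : realType) (V : completeNormedModType R) (ip : V -> V -> R).
Variables (C : set V) (F : V -> V) (F' : V -> V -> V).
Hypothesis hip : is_inner_product ip.
Hypothesis convC : convex_set_V C.
Hypothesis linF' : bounded_linear_on C F'.
Hypothesis derF : frechet_deriv_on C F F'.

Lemma deriv_scale y a u : C y -> F' y (a *: u) = a *: F' y u.
Proof.
move=> Cy; have [lin _] := linF' Cy.
have F'0 : F' y 0 = 0.
  have := lin 1 0 0; rewrite !scale1r addr0 => h.
  by apply: (addrI (F' y 0)); rewrite addr0 -h.
by have := lin a u 0; rewrite !addr0 F'0 addr0.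
Qed.

Definition segment (y y' : V) (t : R) : V := y + t *: (y' - y).

Lemma segment_in y y' t : C y -> C y' -> 0 <= t <= 1 -> C (segment y y' t).
Proof.
move=> Cy Cy' /andP[t0 t1]; have := convC Cy' Cy t0 t1.
by rewrite /segment scalerBl scale1r scalerBr addrCA.
Qed.

Lemma segmentB y y' s t : segment y y' s - segment y y' t = (s - t) *: (y' - y).
Proof. by rewrite /segment opprD addrACA subrr add0r scalerBl. Qed.

Lemma segment0 y y' : segment y y' 0 = y.
Proof. by rewrite /segment scale0r addr0. Qed.

Lemma segment1 y y' : segment y y' 1 = y'.
Proof. by rewrite /segment scale1r addrCA subrr addr0. Qed.

Lemma derivative_within_segment y y' E : C y -> C y' ->
  derivative_within [set t | 0 <= t <= 1]
    (fun t => ip (F (segment y y' t) - t *: F' y (y' - y)) E)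
    (fun t => ip (F' (segment y y' t) (y' - y) - F' y (y' - y)) E).
Proof.
move=> Cy Cy' t t01 e e0.
set d := y' - y; set z := segment y y'.
have Czt : C (z t) := segment_in Cy Cy' t01.
have dE0 : 0 < `|d| * `|E| + 1 by rewrite ltr_pwDr // mulr_ge0.
have [r [r0 Hr]] := derF Czt (divr_gt0 e0 dE0).
exists (r / (`|d| + 1)); first by rewrite divr_gt0 // ltr_pwDr.
move=> s s01; rewrite ltr_pdivlMr ?ltr_pwDr // => st.
have zst : z s - z t = (s - t) *: d := segmentB y y' s t.
have nzst : `|z s - z t| = `|s - t| * `|d| by rewrite zst normrZ.
have st0 := normr_ge0 (s - t); have d0 := normr_ge0 d.
have /Hr : `|z s - z t| < r by rewrite nzst; nra.
move/(_ (segment_in Cy Cy' s01)). rewrite nzst zst deriv_scale //.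
set err := F (z s) - F (z t) - (s - t) *: F' (z t) d => herr.
have -> : ip (F (z s) - s *: F' y d) E - ip (F (z t) - t *: F' y d) E -
    (s - t) * ip (F' (z t) d - F' y d) E = ip err E.
  by rewrite /err !(ipBl hip, ipZl hip); ring.
apply: le_trans (normr_ip_le hip _ _) (le_trans (ler_wpM2r (normr_ge0 E) herr) _).
set k := `|d| * `|E| + 1 in dE0 *.
have ek : e / k * (`|d| * `|E|) <= e.
   by rewrite mulrAC ler_pdivrMr // ler_pM2l // /k lerDl.
have := ler_wpM2l st0 ek; set c := e / k; nra.
Qed.

Lemma monotone_deriv_ge0 y y' : monotone_on ip C F -> C y -> C y' ->
  0 <= ip (F' y (y' - y)) (y' - y).
Proof.
move=> monF Cy Cy'; set d := y' - y.
apply/ler_addgt0Pr => e e0.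
have derG := derivative_within_segment d Cy Cy'.
have [|r r0 Hr] := derG 0 _ e e0; first by rewrite /= lexx ler01.
set s := Num.min 1 (r / 2).
have s0 : 0 < s by rewrite lt_min ltr01 divr_gt0.
have s01 : 0 <= s <= 1 by rewrite ltW //= ge_min lexx.
have /(Hr s s01) : `|s - 0| < r.
  by rewrite subr0 gtr0_norm // gt_min orbC (ltr_pdivrMr _ _ (ltr0n _ 2)) ltr_pMr ?ltr1n.
rewrite segment0 scale0r !subr0 subrr ip0l // mulr0 subr0 -/d ipBl // ipZl // (gtr0_norm s0).
have : 0 <= s * (ip (F (segment y y' s)) d - ip (F y) d).
  have := monF _ _ (segment_in Cy Cy' s01) Cy.
  by rewrite -[X in segment y y' s - X](segment0 y y') segmentB subr0 ipZr // ipBl.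
rewrite pmulr_rge0 //; set b := ip (F (segment y y' s)) d - ip (F y) d => b0.
have -> : ip (F (segment y y' s)) d - s * ip (F' y d) d - ip (F y) d = b - s * ip (F' y d) d.
  by rewrite /b; ring.
rewrite ler_norml => /andP[_ h]; rewrite -(pmulr_rge0 _ s0); nra.
Qed.

Lemma taylor_remainder_le L y y' : 0 <= L -> deriv_lipschitz_on C F' L -> C y -> C y' ->
  `|F y' - F y - F' y (y' - y)| <= L / 2 * `|y' - y| ^+ 2.
Proof.
move=> L0 lipF' Cy Cy'; set d := y' - y; set E := F y' - F y - F' y d.
have E0 := normr_ge0 E; have d0 := normr_ge0 d.
have M0 : 0 <= L * `|d| ^+ 2 * `|E| by rewrite !mulr_ge0 ?exprn_ge0.
have := derivative_within_linear_bound M0 (derivative_within_segment E Cy Cy').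
rewrite segment1 segment0 scale1r scale0r subr0 -/d -ipBl //.
have -> : F y' - F' y d - F y = E by rewrite /E addrAC.
rewrite ip_normr2 //.
move=> H; have {H} : `|E| ^+ 2 <= L * `|d| ^+ 2 * `|E| / 2.
  apply: H => t /andP[t0 t1].
  have le_t01 : 0 <= t <= 1 by rewrite !ltW.
  apply: le_trans (ip_le_mul_norm hip _ _) _.
  have /(ler_wpM2r E0) := lipF' _ _ (segment_in Cy Cy' le_t01) Cy d.
  rewrite -[X in segment y y' t - X](segment0 y y') segmentB subr0 normrZ (gtr0_norm t0).
  by move=> h; apply: le_trans h _; rewrite le_eqVlt; apply/orP; left; apply/eqP; ring.
have [->|En0] := eqVneq `|E| 0; first by rewrite mulr_ge0 ?exprn_ge0 ?divr_ge0.
have Ep : 0 < `|E| by rewrite lt_def En0 E0.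
move=> h; rewrite expr2 in h; nra.
Qed.

End DerivativeAlongSegments.

Section StepParameters.
Variable R : realType.
Implicit Types sh theta eta L : R.

Lemma thetahatE sh theta : sh != 1 ->
  thetahat sh theta = sh * (theta / (1 - sh)) + (theta / (1 - sh)) ^+ 2.
Proof. by move=> sh1; rewrite /thetahat; field; rewrite subr_eq0 eq_sym. Qed.

Lemma thetahat_bounds sh theta : 0 <= sh -> sh < 1 / 2 -> 0 < theta ->
  theta < (1 - sh) * (1 - 2 * sh) -> 0 < thetahat sh theta < theta.
Proof.
move=> sh0 sh_lt theta0 theta_lt; have q0 : 0 < 1 - sh by lra.
have q2 : 0 < (1 - sh) ^+ 2 by rewrite exprn_gt0.
have -> : thetahat sh theta = theta * ((sh * (1 - sh) + theta) / (1 - sh) ^+ 2).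
  by rewrite /thetahat; field; rewrite gt_eqF.
rewrite mulr_gt0 ?divr_gt0 //=; last by nra.
rewrite -[X in _ < X]mulr1 ltr_pM2l // ltr_pdivrMr // mul1r expr2; nra.
Qed.

(* tau_param is the smaller root of theta t^2 - (2 theta + eta L / 2) t + theta - thetahat. *)
Lemma tau_param_spec sh theta eta L : 0 < theta ->
  0 < thetahat sh theta < theta -> 0 < L -> 0 < eta ->
  let tau := tau_param sh theta eta L in
  [/\ 0 < tau, tau < 1 & theta * (1 - tau) ^+ 2 = thetahat sh theta + tau * eta * L / 2].
Proof.
move=> theta0 /andP[th0 th_lt] L0 eta0 /=; rewrite /tau_param.
set th := thetahat sh theta in th0 th_lt *; set b := 2 * theta + eta * L / 2; set q := theta - th.
set D := b ^+ 2 - 4 * theta * q.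
have eL : 0 < eta * L by rewrite mulr_gt0.
have D0 : 0 <= D.
  have -> : D = (eta * L / 2) ^+ 2 + 4 * theta * (eta * L / 2 + th) by rewrite /D /b /q; ring.
  by rewrite addr_ge0 ?sqr_ge0 // !mulr_ge0 // ?addr_ge0 ?ltW ?divr_gt0.
have sD0 := sqrtr_ge0 D; have sD2 : Num.sqrt D ^+ 2 = D by rewrite sqr_sqrtr.
have eL2 : 0 < eta * L / 2 by rewrite divr_gt0.
have u0 : 0 < b + Num.sqrt D by rewrite /b; lra.
have q0 : 0 < q by rewrite subr_gt0.
split; first by rewrite divr_gt0 ?mulr_gt0.
  by rewrite ltr_pdivrMr // mul1r /b /q; lra.
move: (Num.sqrt D) sD2 u0 => sd sd2 u0.
apply/eqP; rewrite -subr_eq0.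
have -> : theta * (1 - 2 * q / (b + sd)) ^+ 2 - (th + 2 * q / (b + sd) * eta * L / 2) =
    q * (sd ^+ 2 - D) / (b + sd) ^+ 2.
  by rewrite /D /q /b; field; rewrite gt_eqF //; move: u0; rewrite /b; lra.
by rewrite sd2 subrr mulr0 mul0r.
Qed.

End StepParameters.

Section Residual.
Variables (R : comRingType) (V : lmodType R) (F : V -> V).

Definition residual (lam : R) (x y nu : V) : V := lam *: (F y + nu) + y - x.

Lemma residual_shift A lam x y nu :
  residual lam x y nu = lam *: (A + nu) + y - x + lam *: (F y - A).
Proof.
rewrite /residual [RHS]addrAC [in RHS](addrAC (lam *: _)) -scalerDr.
by congr (lam *: _ + _ - _); rewrite addrCA [A + nu]addrC addrK.
Qed.

Lemma residual_relaxed tau lam x y nu :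
  residual ((1 - tau) * lam) (x - (tau * lam) *: (F y + nu)) y nu = residual lam x y nu.
Proof.
rewrite /residual opprB addrA; congr (_ - _).
by rewrite addrAC -scalerDl mulrBl mul1r subrK.
Qed.

Lemma residual_mulr c lam x y nu :
  residual (lam * c) x y nu = c *: residual lam x y nu + (1 - c) *: (y - x).
Proof.
rewrite /residual -!addrA [c *: _]scalerDr -[RHS]addrA -scalerDl (addrC c) subrK.
by rewrite scale1r scalerA mulrC.
Qed.

End Residual.

Section InexactNewtonStep.
Variables (R : realType) (V : completeNormedModType R) (ip : V -> V -> R).
Variables (C : set V) (F : V -> V) (F' : V -> V -> V).
Hypothesis hip : is_inner_product ip.
Hypothesis convC : convex_set_V C.
Hypothesis linF' : bounded_linear_on C F'.
Hypothesis derF : frechet_deriv_on C F F'.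
Hypothesis monF : monotone_on ip C F.

Lemma newton_step_length_le sh lam x y y' nu nu' :
  normal_cone ip C y nu -> normal_cone ip C y' nu' -> 0 < lam ->
  `|lam *: (Flin F F' y y' + nu') + y' - x| <= sh * `|y' - y| ->
  (1 - sh) * `|y' - y| <= `|residual F lam x y nu|.
Proof.
move=> [Cy ncy] [Cy' ncy'] lam0; set d := y' - y; set p := lam *: _ + y' - x => hp.
set s := residual F lam x y nu.
have d0 := normr_ge0 d.
have mon := monotone_deriv_ge0 hip convC linF' derF monF Cy Cy'; rewrite -/d in mon.
have nu_d : ip nu d <= 0 := ncy y' Cy'.
have nu'_d : 0 <= ip nu' d by have := ncy' y Cy; rewrite /d !ipBr //; lra.
have low : `|d| ^+ 2 <= ip p d - ip s d.
  have -> : ip p d - ip s d = lam * ip (F' y d) d + lam * (ip nu' d - ip nu d) + ip d d.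
    by rewrite /p /s /residual /Flin /d !(ipDl hip, ipNl hip, ipZl hip); ring.
  have := mulr_ge0 (ltW lam0) mon.
  have : 0 <= lam * (ip nu' d - ip nu d) by apply: mulr_ge0; [exact: ltW | lra].
  rewrite ip_normr2 //; lra.
have up : ip p d - ip s d <= (sh * `|d| + `|s|) * `|d|.
  have := ip_le_mul_norm hip p d; have := ip_le_mul_norm hip (- s) d.
  rewrite ipNl // normrN; have := ler_wpM2r d0 hp; nra.
have [->|dn0] := eqVneq `|d| 0; first by rewrite mulr0.
have dp : 0 < `|d| by rewrite lt_def dn0 d0.
by move: (le_trans low up); rewrite expr2 ler_pM2r //; lra.
Qed.

Lemma newton_step_residual_le L sh lam x y y' nu' :
  0 <= L -> deriv_lipschitz_on C F' L -> C y -> C y' -> 0 <= lam ->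
  `|lam *: (Flin F F' y y' + nu') + y' - x| <= sh * `|y' - y| ->
  `|residual F lam x y' nu'| <= sh * `|y' - y| + lam * (L / 2 * `|y' - y| ^+ 2).
Proof.
move=> L0 lipF' Cy Cy' lam0 hp.
rewrite (residual_shift F (Flin F F' y y')); apply: le_trans (ler_normD _ _) _.
apply: lerD => //; rewrite normrZ ger0_norm // ler_wpM2l //.
rewrite /Flin opprD addrA.
exact: (taylor_remainder_le hip convC linF' derF L0 lipF' Cy Cy').
Qed.

Lemma newton_step_scaled_residual_le L sh theta lam x y y' nu nu' :
  0 <= L -> deriv_lipschitz_on C F' L -> 0 <= sh < 1 ->
  normal_cone ip C y nu -> normal_cone ip C y' nu' -> 0 < lam ->
  `|lam *: (Flin F F' y y' + nu') + y' - x| <= sh * `|y' - y| ->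
  lam * L / 2 * `|residual F lam x y nu| <= theta ->
  lam * L / 2 * `|residual F lam x y' nu'| <= thetahat sh theta.
Proof.
move=> L0 lipF' /andP[sh0 sh1] ncy ncy' lam0 hp hs.
have dist := newton_step_length_le ncy ncy' lam0 hp.
have res := newton_step_residual_le L0 lipF' ncy.1 ncy'.1 (ltW lam0) hp.
set a := lam * L / 2 * `|y' - y|.
have lamL0 : 0 <= lam * L / 2 by rewrite divr_ge0 // mulr_ge0 // ltW.
have a0 : 0 <= a := mulr_ge0 lamL0 (normr_ge0 _).
have q0 : 0 < 1 - sh by rewrite subr_gt0.
have aB : a <= theta / (1 - sh).
  rewrite ler_pdivlMr // mulrC; apply: le_trans hs.
  by have := ler_wpM2l lamL0 dist; rewrite /a; lra.
apply: le_trans (ler_wpM2l lamL0 res) _.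
rewrite thetahatE ?lt_eqF // -/a.
have -> : lam * L / 2 * (sh * `|y' - y| + lam * (L / 2 * `|y' - y| ^+ 2)) = sh * a + a ^+ 2.
  by rewrite /a; field.
by rewrite lerD ?ler_wpM2l // lerXn2r ?nnegrE // (le_trans a0).
Qed.

End InexactNewtonStep.

Section EnumerationOfA.
Variable A : set nat.
Hypothesis A0 : ~ A 0%N.

Lemma enumA_succ j : (exists n, A n /\ (enumA A j < n)%N) ->
  [/\ A (enumA A j.+1), (enumA A j < enumA A j.+1)%N &
      forall m, (enumA A j < m)%N -> (m < enumA A j.+1)%N -> ~ A m].
Proof.
set p := enumA A j => exA.
have exA' : exists n, `[< A n >] && (p < n)%N.
  by case: exA => n [An pn]; exists n; rewrite pn andbT; apply/asboolP.
case: (ex_minnP exA') => m /andP[/asboolP Am pm] m_min.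
have : [set n | A n /\ (p < n)%N /\ forall m, (p < m)%N -> (m < n)%N -> ~ A m] m.
  split=> //; split=> // m' pm' m'm Am'.
  by have := m_min m'; rewrite pm' andbT leqNgt m'm => /(_ (introT (asboolP _) Am')).
by move=> /(xgetI 0%N) [? []].
Qed.

Definition enumA_covers j := forall n, A n -> (n <= enumA A j)%N ->
  exists2 l, (0 < l <= j)%N & n = enumA A l.

Lemma enumA_exists_next k j : (`I_k #<= A)%card -> (j < k)%N -> enumA_covers j ->
  exists n, A n /\ (enumA A j < n)%N.
Proof.
move=> Ak jk covj; apply: contrapT => noA.
have sub : A `<=` (fun l => enumA A l.+1) @` `I_j.
  move=> n An; have [|l /andP[l0 lj] ->] := covj n An.
    by rewrite leqNgt; apply/negP => h; apply: noA; exists n.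
  by exists l.-1; [rewrite /= prednK | rewrite prednK].
have := card_le_trans Ak (card_le_trans (subset_card_le sub) (card_image_le _ _)).
by rewrite card_le_II leqNgt jk.
Qed.

Lemma enumA_covers_le k j : (`I_k #<= A)%card -> (j <= k)%N -> enumA_covers j.
Proof.
move=> Ak; elim: j => [_ n An|j IH jk]; first by rewrite leqn0 => /eqP n0; move: An; rewrite n0.
have covj := IH (ltnW jk).
have [Aj1 lt_j1 gap] := enumA_succ (enumA_exists_next Ak jk covj).
move=> n An nle; case: (leqP n (enumA A j)) => h.
  by have [l /andP[l0 lj] ->] := covj n An h; exists l; rewrite ?l0 ?(leq_trans lj).
case: (ltngtP n (enumA A j.+1)) => [h2||->]; first by case: (gap n h h2).
  by rewrite ltnNge nle.
by exists j.+1; rewrite ?leqnn.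
Qed.

Lemma enumA_spec k : (`I_k #<= A)%card -> (0 < k)%N ->
  [/\ A (enumA A k), (enumA A k.-1 < enumA A k)%N &
      forall m, (enumA A k.-1 < m)%N -> (m < enumA A k)%N -> ~ A m].
Proof.
move=> Ak k0; have jk : (k.-1 < k)%N by rewrite prednK.
by have := enumA_succ (enumA_exists_next Ak jk (enumA_covers_le Ak (ltnW jk))); rewrite prednK.
Qed.

End EnumerationOfA.

Lemma extrapolated_residual_le (R : realType) (V : normedModType R) (th theta tau eta L lm : R) (r w : V) :
  0 < tau < 1 -> 0 < L -> 0 < lm -> th + tau * eta * L / 2 <= theta * (1 - tau) ^+ 2 ->
  lm * L / 2 * `|r| <= th -> lm * `|w| < eta ->
  lm / (1 - tau) * L / 2 * `|(1 - tau)^-1 *: r + (1 - (1 - tau)^-1) *: w| <= theta.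
Proof.
move=> /andP[tau0 tau1] L0 lm0 hth hr hw.
have q0 : 0 < 1 - tau by rewrite subr_gt0.
have c1 : 1 <= (1 - tau)^-1 by rewrite invf_ge1 // gerBl ltW.
have c0 : 0 < (1 - tau)^-1 by rewrite invr_gt0.
set c := (1 - tau)^-1 in c0 c1 *.
have lmL0 : 0 <= lm * L / 2 by rewrite divr_ge0 // mulr_ge0 // ltW.
have hw' : lm * L / 2 * `|w| <= eta * L / 2.
  by have := ler_wpM2r (ltW (divr_gt0 L0 (ltr0n _ 2))) (ltW hw); lra.
have hrw : `|c *: r + (1 - c) *: w| <= c * `|r| + (c - 1) * `|w|.
  apply: le_trans (ler_normD _ _) _.
  by rewrite !normrZ (gtr0_norm c0) ler0_norm ?opprB // subr_le0.
set N := `|_ + _|.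
have -> : lm / (1 - tau) * L / 2 * N = c * (lm * L / 2 * N) by rewrite /c; field; rewrite gt_eqF.
apply: le_trans (ler_wpM2l (ltW c0) (ler_wpM2l lmL0 hrw)) _.
have -> : theta = c ^+ 2 * (theta * (1 - tau) ^+ 2) by rewrite /c; field; rewrite gt_eqF.
have hcr := ler_wpM2l (ltW c0) hr.
have hcw : (c - 1) * (lm * L / 2 * `|w|) <= (c - 1) * (eta * L / 2).
  by rewrite ler_wpM2l // subr_ge0.
have -> : c * (lm * L / 2 * (c * `|r| + (c - 1) * `|w|)) =
  c * (c * (lm * L / 2 * `|r|) + (c - 1) * (lm * L / 2 * `|w|)) by ring.
apply: le_trans (ler_wpM2l (ltW c0) (lerD hcr hcw)) _.
have -> : c * (c * th + (c - 1) * (eta * L / 2)) = c ^+ 2 * (th + tau * eta * L / 2).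
  by rewrite /c; field; rewrite gt_eqF.
by rewrite ler_wpM2l // exprn_ge0 // ltW.
Qed.

Section Algorithm2.
Variables (R : realType) (V : completeNormedModType R) (ip : V -> V -> R).
Variables (C : set V) (F : V -> V) (F' : V -> V -> V) (L sh theta eta : R).
Variables (x y nu : nat -> V) (lam : nat -> R).
Hypothesis hip : is_inner_product ip.
Hypothesis convC : convex_set_V C.
Hypothesis monF : monotone_on ip C F.
Hypothesis linF' : bounded_linear_on C F'.
Hypothesis derF : frechet_deriv_on C F F'.
Hypothesis L0 : 0 < L.
Hypothesis lipF' : deriv_lipschitz_on C F' L.
Hypothesis sh0 : 0 <= sh.
Hypothesis sh_lt : sh < 1 / 2.
Hypothesis theta0 : 0 < theta.
Hypothesis theta_lt : theta < (1 - sh) * (1 - 2 * sh).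
Hypothesis eta_gt : 2 * thetahat sh theta / L < eta.
Hypothesis run : Alg2_run ip C F F' L sh theta eta x y nu lam.

Local Notation th := (thetahat sh theta).
Local Notation tau := (tau_param sh theta eta L).
Local Notation A := (setA eta x y lam).

Let th_bounds : 0 < th < theta := thetahat_bounds sh0 sh_lt theta0 theta_lt.

Let eta0 : 0 < eta.
Proof. by apply: lt_trans eta_gt; rewrite divr_gt0 // mulr_gt0 //; case/andP: th_bounds. Qed.

Let tau_spec := tau_param_spec theta0 th_bounds L0 eta0.

Definition alg2_invariant k := [/\ normal_cone ip C (y k) (nu k), 0 < lam k.+1 &
  lam k.+1 * L / 2 * `|residual F (lam k.+1) (x k) (y k) (nu k)| <= theta].

Lemma alg2_invariant0 : alg2_invariant 0.
Proof.
rewrite /alg2_invariant; case: run => [[Cx0 -> ->] [lam1 lam1F] _ _].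
split=> //; first by split=> // z _; rewrite (ip0l hip).
rewrite /residual addr0 addrK normrZ gtr0_norm //.
have -> : lam 1%N * L / 2 * (lam 1%N * `|F (x 0%N)|) = L / 2 * (lam 1%N ^+ 2 * `|F (x 0%N)|).
  by rewrite expr2; ring.
rewrite -ler_pdivlMl ?divr_gt0 //; apply: le_trans lam1F _.
by rewrite le_eqVlt; apply/orP; left; apply/eqP; field; rewrite gt_eqF.
Qed.

Lemma alg2_newton_step k : alg2_invariant k -> normal_cone ip C (y k.+1) (nu k.+1) /\
  lam k.+1 * L / 2 * `|residual F (lam k.+1) (x k) (y k.+1) (nu k.+1)| <= th.
Proof.
case=> ncy lam0 hs; case: run => _ _ /(_ k) [accept newton] _.
have [small|big] := boolP (lam k.+1 * L / 2 * `|residual F (lam k.+1) (x k) (y k) (nu k)| <= th).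
  by have [-> ->] := accept small.
have [ncy' hp] := newton (negP big).
have sh01 : 0 <= sh < 1.
  by rewrite sh0 /=; apply: lt_trans sh_lt _; rewrite ltr_pdivrMr // mul1r ltr1n.
split=> //; exact (newton_step_scaled_residual_le hip convC linF' derF monF (ltW L0) lipF' sh01 ncy ncy' lam0 hp hs).
Qed.

Lemma alg2_invariantS k : alg2_invariant k -> alg2_invariant k.+1.
Proof.
move=> inv; have [ncy' hr] := alg2_newton_step inv; have [_ lam0 _] := inv.
have [tau0 tau1 tau_root] := tau_spec; have [th0 th_lt] := andP th_bounds.
rewrite /alg2_invariant; case: run => _ _ _ /(_ k) [large small].
have [A_k|notA_k] := boolP (eta <= lam k.+1 * `|y k.+1 - x k|).
  have [-> ->] := large A_k; rewrite residual_relaxed.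
  split=> //; first by rewrite mulr_gt0 // subr_gt0.
  have : 0 <= lam k.+1 * L / 2 * `|residual F (lam k.+1) (x k) (y k.+1) (nu k.+1)|.
    by rewrite mulr_ge0 // divr_ge0 // mulr_ge0 // ltW.
  nra.
have [-> ->] := small (negP notA_k); rewrite residual_mulr.
split=> //; first by rewrite divr_gt0 // subr_gt0.
apply: extrapolated_residual_le; rewrite ?tau0 ?tau1 ?tau_root //.
by rewrite ltNge.
Qed.

Lemma alg2_invariant_all k : alg2_invariant k.
Proof. by elim: k => [|k /alg2_invariantS]; [exact: alg2_invariant0 |]. Qed.

Lemma alg2_large_step k : eta <= lam k.+1 * `|y k.+1 - x k| ->
  `|residual F (lam k.+1) (x k) (y k.+1) (nu k.+1)| <=
    2 * th / (eta * L) * `|y k.+1 - x k|.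
Proof.
move=> hk; have [_ hr] := alg2_newton_step (alg2_invariant_all k).
have [_ lam0 _] := alg2_invariant_all k.
rewrite mulrAC ler_pdivlMr ?mulr_gt0 //.
have r0 := normr_ge0 (residual F (lam k.+1) (x k) (y k.+1) (nu k.+1)).
have := ler_wpM2l (mulr_ge0 r0 (ltW L0)) hk.
have := ler_wpM2l (mulr_ge0 (ler0n _ 2) (normr_ge0 (y k.+1 - x k))) hr.
move: (normr_ge0 (y k.+1 - x k)); lra.
Qed.

Lemma alg2_x_stationary j n : (forall m, (j < m <= j + n)%N -> ~ A m) -> x (j + n) = x j.
Proof.
elim: n => [|n IH] gap; first by rewrite addn0.
rewrite addnS.
have notA : ~ (eta <= lam (j + n).+1 * `|y (j + n).+1 - x (j + n)%N|).
  by move=> h; apply: (gap (j + n).+1); [rewrite ltnS leq_addr addnS /= | split].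
case: run => _ _ _ /(_ (j + n)%N) [_ /(_ notA) [-> _]].
by apply: IH => m /andP[jm mn]; apply: gap; rewrite jm addnS leqW.
Qed.

Lemma alg2_large_steps_hpe k : setK A k ->
  let i := enumA A in
  [/\ 0 < lam (i k), normal_cone ip C (y (i k)) (nu (i k)),
      `|residual F (lam (i k)) (x (i k.-1)) (y (i k)) (nu (i k))|
        <= 2 * th / (eta * L) * `|y (i k) - x (i k.-1)|,
      eta <= lam (i k) * `|y (i k) - x (i k.-1)| &
      x (i k) = x (i k.-1) - (tau * lam (i k)) *: (F (y (i k)) + nu (i k))].
Proof.
case=> k1 Ak i; have A0 : ~ A 0%N by case.
have [Aik lt_ik gap] := enumA_spec A0 Ak k1; rewrite -/i in Aik lt_ik gap.
have ik0 : (0 < i k)%N by case: Aik.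
move: (i k) (i k.-1) ik0 Aik lt_ik gap => [//|j] p _ [_ hA] lt_pj gap.
have pj : (p <= j)%N by rewrite -ltnS.
have <- : x j = x p.
  rewrite -{1}(subnKC pj); apply: alg2_x_stationary => m /andP[pm].
  by rewrite subnKC // -ltnS; exact: gap.
have [_ lam0 _] := alg2_invariant_all j.
have [ncy' _] := alg2_newton_step (alg2_invariant_all j).
case: run => _ _ _ /(_ j) [/(_ hA) [-> _] _].
by split=> //; exact: alg2_large_step.
Qed.

Lemma alg2_parameters :
  [/\ 0 < tau < 1, 0 <= 2 * th / (eta * L) < 1 & 0 < eta].
Proof.
have [tau0 tau1 _] := tau_spec; have [th0 _] := andP th_bounds.
have eL : 0 < eta * L := mulr_gt0 eta0 L0.
rewrite tau0 tau1 (ltW (divr_gt0 (mulr_gt0 (ltr0n _ 2) th0) eL)); split=> //.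
by rewrite ltr_pdivrMr // mul1r -ltr_pdivrMr.
Qed.

End Algorithm2.

Unset Implicit Arguments.

Theorem proposition4p5 (R : realType) (V : completeNormedModType R)
  (ip : V -> V -> R) (C : set V) (F : V -> V) (F' : V -> V -> V)
  (L sigmah theta eta : R) (x y nu : nat -> V) (lam : nat -> R) :
  is_inner_product ip ->
  C !=set0 -> closed C -> convex_set_V C ->
  monotone_on ip C F ->
  bounded_linear_on C F' -> frechet_deriv_on C F F' -> deriv_continuous_on C F' ->
  0 < L -> deriv_lipschitz_on C F' L ->
  (exists z, C z /\ exists nu0, normal_cone ip C z nu0 /\ F z + nu0 = 0) ->
  0 <= sigmah -> sigmah < 1 / 2 ->
  0 < theta -> theta < (1 - sigmah) * (1 - 2 * sigmah) ->
  2 * thetahat sigmah theta / L < eta ->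
  Alg2_run ip C F F' L sigmah theta eta x y nu lam ->
  (forall k : nat, F (y k) + nu k <> 0) ->
  let tau := tau_param sigmah theta eta L in
  let sigma := 2 * thetahat sigmah theta / (eta * L) in
  let A := setA eta x y lam in
  let K := setK A in
  let i := enumA A in
  sigma < 1 /\
  (forall k, K k ->
     [/\ normal_cone ip C (y (i k)) (nu (i k)),
         `|lam (i k) *: (F (y (i k)) + nu (i k)) + y (i k) - x (i k.-1)|
           <= sigma * `|y (i k) - x (i k.-1)|,
         eta <= lam (i k) * `|y (i k) - x (i k.-1)| &
         x (i k) = x (i k.-1) - (tau * lam (i k)) *: (F (y (i k)) + nu (i k))]) /\
  Alg1_run ip C F (x 0%N) tau sigma eta K
    (fun k => x (i k)) (fun k => y (i k)) (fun k => nu (i k)) (fun k => lam (i k)).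
Proof.
move=> hip _ _ convC monF linF' derF _ L0 lipF' _ sh0 sh_lt theta0 theta_lt eta_gt run _.
move=> tau sigma A K i.
have [tau01 /andP[sigma0 sigma1] eta0] :=
  alg2_parameters L0 sh0 sh_lt theta0 theta_lt eta_gt.
have sub := alg2_large_steps_hpe hip convC monF linF' derF L0 lipF' sh0 sh_lt theta0 theta_lt
  eta_gt run.
split=> //; split; first by move=> k /sub [].
by split=> //; rewrite ?sigma0.
Qed.
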